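(* Let $L$ be an $r\times n$ $\boldsymbol\rho$-latin rectangle with $r<n$. Then $L$ can be completed to an $n\times n$ $\boldsymbol\rho$-latin square if and only if $\rho_\ell-e_\ell\le n-r$ for all $\ell\in[k]$ and one (equivalently, given the first condition, every one) of the following six conditions holds: (1) $|J|(n-r)\le\sum_{\ell\in[k]}\min\{\rho_\ell-e_\ell,\ \mu_J(\ell)\}$ for all $J\subseteq[n]$; (2) $\sum_{\ell\in K}(\rho_\ell-e_\ell)\le\sum_{j\in[n]}\min\{n-r,\ \mu_K(j)\}$ for all $K\subseteq[k]$; (3) $|J|(n-r)\ge\sum_{\ell\in[k]}\big((\rho_\ell-e_\ell)\dot-\mu_{\bar J}(\ell)\big)$ for all $J\subseteq[n]$; (4) $\sum_{\ell\in K}(\rho_\ell-e_\ell)\ge\sum_{j\in[n]}\big((n-r)\dot-\mu_{\bar K}(j)\big)$ for all $K\subseteq[k]$; (5) $|J|(n-r)\le\sum_{\ell\in K}(\rho_\ell-e_\ell)+\mu_J(\bar K)$ for all $J\subseteq[n]$ and $K\subseteq[k]$; (6) $\sum_{\ell\in K}(\rho_\ell-e_\ell)\le|J|(n-r)+\mu_K(\bar J)$ for all $J\subseteq[n]$ and $K\subseteq[k]$.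
   Context: Let $n,k$ be positive integers. Let $\boldsymbol\rho=(\rho_1,\dots,\rho_k)$ be integers with $1\le\rho_\ell\le n\le k$ and $\sum_{\ell\in[k]}\rho_\ell=n^2$. The symbols are the elements of $[k]$. A $\boldsymbol\rho$-latin square of order $n$ is an $n\times n$ array with entries in $[k]$, each symbol at most once per row and per column, and symbol $\ell$ occurring exactly $\rho_\ell$ times. An $r\times s$ $\boldsymbol\rho$-latin rectangle is an $r\times s$ array with entries in $[k]$, each symbol at most once per row and per column, and symbol $\ell$ occurring at most $\rho_\ell$ times. Completing it means finding a $\boldsymbol\rho$-latin square of order $n$ whose top-left subarray is $L$. Here $s=n$, so the columns are $[n]$. $e_\ell$ is the number of occurrences of $\ell$ in $L$. For $j\in[n]$, $\ell\in[k]$, $J\subseteq[n]$, $K\subseteq[k]$: - $\mu_K(j)$ is the number of symbols of $K$ not occurring in column $j$ of $L$; - $\mu_J(\ell)$ is the number of columns in $J$ not containing $\ell$; - $\mu_J(K)=\sum_{\ell\in K}\mu_J(\ell)$ and $\mu_K(J)=\sum_{j\in J}\mu_K(j)$. $\bar J=[n]\setminus J$, $\bar K=[k]\setminus K$, and $x\dot- y=\max\{0,x-y\}$. *)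

(* Symbols [k] are represented by 'I_k (symbol l+1 <-> ordinal l),
   rows/columns [n] by 'I_n. *)
From mathcomp Require Import all_boot.
Set Implicit Arguments. Unset Strict Implicit. Unset Printing Implicit Defensive.

Section Latin.
Variables (n k : nat) (rho : 'I_k -> nat).

Definition rho_latin_rect (r : nat) (L : 'I_r -> 'I_n -> 'I_k) : Prop :=
  [/\ (forall (i : 'I_r) (j1 j2 : 'I_n), L i j1 = L i j2 -> j1 = j2),
      (forall (j : 'I_n) (i1 i2 : 'I_r), L i1 j = L i2 j -> i1 = i2) &
      (forall l : 'I_k, #|[set p : 'I_r * 'I_n | L p.1 p.2 == l]| <= rho l)].

Definition rho_latin_square (S : 'I_n -> 'I_n -> 'I_k) : Prop :=
  [/\ (forall (i : 'I_n) (j1 j2 : 'I_n), S i j1 = S i j2 -> j1 = j2),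
      (forall (j : 'I_n) (i1 i2 : 'I_n), S i1 j = S i2 j -> i1 = i2) &
      (forall l : 'I_k, #|[set p : 'I_n * 'I_n | S p.1 p.2 == l]| = rho l)].

Definition completable (r : nat) (L : 'I_r -> 'I_n -> 'I_k) : Prop :=
  exists S : 'I_n -> 'I_n -> 'I_k, rho_latin_square S /\
    forall (i : 'I_n) (i' : 'I_r) (j : 'I_n), nat_of_ord i = nat_of_ord i' ->
      S i j = L i' j.

(* e_l : number of occurrences of l in L *)
Definition occ (r : nat) (L : 'I_r -> 'I_n -> 'I_k) (l : 'I_k) : nat :=
  #|[set p : 'I_r * 'I_n | L p.1 p.2 == l]|.

(* mu_K(j) : number of symbols of K not occurring in column j of L *)
Definition mu_col (r : nat) (L : 'I_r -> 'I_n -> 'I_k) (K : {set 'I_k}) (j : 'I_n) : nat :=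
  #|[set l in K | [forall i : 'I_r, L i j != l]]|.

(* mu_J(l) : number of columns in J not containing l *)
Definition mu_sym (r : nat) (L : 'I_r -> 'I_n -> 'I_k) (J : {set 'I_n}) (l : 'I_k) : nat :=
  #|[set j in J | [forall i : 'I_r, L i j != l]]|.

Definition mu_JK (r : nat) (L : 'I_r -> 'I_n -> 'I_k) (J : {set 'I_n}) (K : {set 'I_k}) : nat :=
  \sum_(l in K) mu_sym L J l.

Definition mu_KJ (r : nat) (L : 'I_r -> 'I_n -> 'I_k) (K : {set 'I_k}) (J : {set 'I_n}) : nat :=
  \sum_(j in J) mu_col L K j.

End Latin.

From mathcomp Require Import all_boot zify.
Set Implicit Arguments. Unset Strict Implicit. Unset Printing Implicit Defensive.

(* Put m = n - r and d_l = rho_l - e_l.  Completing L means choosing the m missing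
   symbols of every column: a set H of (column, symbol) pairs, with l absent from column j
   of L, in which every column has degree m and every symbol l has degree d_l.  Such an H
   with all d_l <= m splits, as in Koenig's edge-colouring theorem, into m matchings that
   saturate the columns (each time take a matching also covering the symbols of maximum
   degree), and these matchings are the new rows.  By Gale's supply-demand theorem, proved
   by deleting edges one at a time and uncrossing tight cuts, H exists iff condition (5)
   holds.  Since the d_l sum to n m, conditions (1)-(4) and (6) are (5) optimised over K or
   J, or with J and K complemented. *)

Section Sums.
Variable T : finType.
Implicit Types (A B : {set T}) (P : pred T) (F : T -> nat).

Lemma sum_mem_card (A : {pred T}) : \sum_x (x \in A) = #|A|.
Proof. by rewrite -sum1_card [RHS]big_mkcond; apply: eq_bigr => x _; case: (x \in A). Qed.

Lemma card_set_in (A : {pred T}) P : #|[set x in A | P x]| = \sum_(x in A) P x.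
Proof.
by rewrite -sum_mem_card [RHS]big_mkcond; apply: eq_bigr => x _; rewrite inE; case: (x \in A).
Qed.

Lemma sum_pred_card P : \sum_x P x = #|P|.
Proof. exact: sum_mem_card. Qed.

Lemma sum_delta (a : T) : \sum_x (a == x) = 1.
Proof. by rewrite sum_pred_card -(card1 a); apply: eq_card => x; rewrite !inE eq_sym. Qed.

Lemma sum_delta_in (J : {pred T}) (a : T) : \sum_(x in J) (a == x) = (a \in J).
Proof.
case: (boolP (a \in J)) => aJ.
  by rewrite (bigD1 a) //= eqxx big1 // => x /andP [_ /negbTE]; rewrite eq_sym => ->.
by rewrite big1 // => x xJ; apply/eqP; rewrite eqb0; apply: contraNN aJ => /eqP->.
Qed.

Lemma sum_subn_delta (J : {pred T}) F (a : T) : 0 < F a ->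
  \sum_(x in J) F x = \sum_(x in J) (F x - (a == x)) + (a \in J).
Proof.
move=> Fa; rewrite -sum_delta_in -big_split; apply: eq_bigr => x _.
by case: eqP => [<-|_] /=; [rewrite subnK | rewrite subn0 addn0].
Qed.

Lemma sum_in_mul (J : {pred T}) F : \sum_(x in J) F x = \sum_x (x \in J) * F x.
Proof. by rewrite big_mkcond; apply: eq_bigr => x _; case: (x \in J); rewrite ?mul1n. Qed.

Lemma sum_setUI A B F :
  \sum_(x in A :|: B) F x + \sum_(x in A :&: B) F x = \sum_(x in A) F x + \sum_(x in B) F x.
Proof.
rewrite !(sum_in_mul _ F) -!big_split; apply: eq_bigr => x _; rewrite !inE.
by case: (x \in A); case: (x \in B); rewrite /= ?mul0n ?addn0.
Qed.

Lemma sum_setC A F : \sum_(x in A) F x + \sum_(x in ~: A) F x = \sum_x F x.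
Proof.
rewrite !(sum_in_mul _ F) -!big_split; apply: eq_bigr => x _; rewrite !inE.
by case: (x \in A); rewrite /= ?mul0n ?addn0.
Qed.

Lemma sum_le_eq (F G : T -> nat) :
  (forall x, F x <= G x) -> \sum_x F x = \sum_x G x -> F =1 G.
Proof.
move=> FG eqFG x; have [_] := leqif_sum (P := predT) (fun x _ => leqif_eq (FG x)).
by rewrite eqFG eqxx => /esym/forall_inP/(_ x isT)/eqP.
Qed.

Lemma sum_pred_le1_uniq P : \sum_x P x <= 1 -> {in P &, forall x y, x = y}.
Proof. by rewrite sum_pred_card => /card_le1_eqP eqP x y Px Py; apply: eqP. Qed.

Lemma sum_pred_gt0_exists P : 0 < \sum_x P x -> exists x, P x.
Proof. by rewrite sum_pred_card => /card_gt0P [x]; exists x. Qed.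

Lemma sum_inj_le1 (U : eqType) (f : T -> U) (u : U) :
  injective f -> \sum_x (f x == u) <= 1.
Proof.
move=> f_inj; rewrite sum_pred_card; apply/card_le1_eqP => x1 x2.
by rewrite !unfold_in => /eqP <- /eqP /f_inj.
Qed.

Lemma sum_pred_le1_exists P : \sum_x P x <= 1 -> \sum_x P x = [exists x, P x].
Proof.
rewrite sum_pred_card; case: existsP => [[x Px] | noP] le1.
  have : 0 < #|P| by apply/card_gt0P; exists x.
  lia.
by apply/eqP; rewrite eqn0Ngt; apply/card_gt0P => -[x Px]; apply: noP; exists x.
Qed.

End Sums.

Lemma sum_option (T : finType) (F : option T -> nat) :
  \sum_o F o = F None + \sum_x F (Some x).
Proof.
rewrite (bigD1 None) //=; congr (_ + _).
rewrite -(big_imset _ (h := Some) (A := predT)); last by move=> x y _ _ [].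
apply: eq_bigl => -[x|] /=; apply/esym/imsetP; first by exists x.
by case.
Qed.

Lemma sum_pairE (X Y : finType) (A : {set X * Y}) (F : X * Y -> nat) :
  \sum_(p in A) F p = \sum_x \sum_y ((x, y) \in A) * F (x, y).
Proof. by rewrite sum_in_mul pair_big; apply: eq_big => -[]. Qed.

Section Transport.
Variables X Y : finType.
Implicit Types (A H : {set X * Y}) (J : {set X}) (K : {set Y}).
Implicit Types (a : X -> nat) (b : Y -> nat).

Definition edges_out A J K : nat := \sum_(p in A) ((p.1 \in J) && (p.2 \notin K)).
Definition deg1 H x : nat := \sum_(p in H) (p.1 == x).
Definition deg2 H y : nat := \sum_(p in H) (p.2 == y).

Definition transport_cond A a b :=
  forall J K, \sum_(x in J) a x <= \sum_(y in K) b y + edges_out A J K.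

Lemma edges_outD1 A e J K : e \in A ->
  edges_out A J K = ((e.1 \in J) && (e.2 \notin K)) + edges_out (A :\ e) J K.
Proof. exact: big_setD1. Qed.

Lemma edges_outS A A' J J' K K' : A \subset A' -> J \subset J' -> K' \subset K ->
  edges_out A J K <= edges_out A' J' K'.
Proof.
move=> /subsetP sA /subsetP sJ /subsetP sK.
rewrite /edges_out (sum_in_mul A) (sum_in_mul A').
apply: leq_sum => p _; case: (boolP (p \in A)) => [/sA -> /=|//].
case: (boolP (p.1 \in J)) => [/sJ -> /=|//]; case: (boolP (p.2 \in K')) => [/sK ->//|_].
by rewrite mul1n leq_b1.
Qed.

Lemma edges_out_uncross A J1 K1 J2 K2 :
  edges_out A (J1 :|: J2) (K1 :|: K2) + edges_out A (J1 :&: J2) (K1 :&: K2)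
    + edges_out A (J1 :\: J2) (~: (K2 :\: K1))
  <= edges_out A J1 K1 + edges_out A J2 K2.
Proof.
rewrite /edges_out -!big_split; apply: leq_sum => p _; rewrite !inE.
by case: (p.1 \in J1); case: (p.1 \in J2); case: (p.2 \in K1); case: (p.2 \in K2).
Qed.

Lemma deg1_setU1 H e x : e \notin H -> deg1 (e |: H) x = (e.1 == x) + deg1 H x.
Proof. exact: big_setU1. Qed.

Lemma deg2_setU1 H e y : e \notin H -> deg2 (e |: H) y = (e.2 == y) + deg2 H y.
Proof. exact: big_setU1. Qed.

Lemma deg1E H x : deg1 H x = \sum_y ((x, y) \in H).
Proof.
rewrite /deg1 sum_pairE (bigD1 x) //= [X in _ + X]big1 ?addn0.
  by apply: eq_bigr => y _; rewrite eqxx muln1.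
by move=> x' /negbTE x'x; apply: big1 => y _; rewrite x'x muln0.
Qed.

Lemma deg2E H y : deg2 H y = \sum_x ((x, y) \in H).
Proof.
rewrite /deg2 sum_pairE; apply: eq_bigr => x _.
rewrite (bigD1 y) //= big1 ?eqxx ?muln1 ?addn0 // => y' /negbTE y'y.
by rewrite y'y muln0.
Qed.

Lemma sum_deg1_deg2 H : \sum_x deg1 H x = \sum_y deg2 H y.
Proof.
rewrite /deg1 /deg2 exchange_big [RHS]exchange_big /=; apply: eq_bigr => p _.
by rewrite !sum_delta.
Qed.

Lemma sum_deg1_in H J : \sum_(x in J) deg1 H x = \sum_(p in H) (p.1 \in J).
Proof. by rewrite /deg1 exchange_big; apply: eq_bigr => p _; apply: sum_delta_in. Qed.

Lemma sum_deg2_in H K : \sum_(y in K) deg2 H y = \sum_(p in H) (p.2 \in K).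
Proof. by rewrite /deg2 exchange_big; apply: eq_bigr => p _; apply: sum_delta_in. Qed.

Lemma transport_cond0 a b : transport_cond set0 a b -> forall x, a x = 0.
Proof.
move=> hc x; have := hc [set x] set0.
by rewrite big_set1 big_set0 /edges_out big_set0 leqn0 => /eqP.
Qed.

Lemma critical_edge A a b e J K : transport_cond A a b -> e \in A ->
  \sum_(y in K) b y + edges_out (A :\ e) J K < \sum_(x in J) a x ->
  [/\ e.1 \in J, e.2 \notin K, 0 < a e.1 & 0 < b e.2].
Proof.
move=> hc eA hJK; have := hc J K; rewrite (edges_outD1 _ _ eA).
case: (boolP ((e.1 \in J) && (e.2 \notin K))) => [/andP [eJ eK] _|]; last by lia.
split=> //; rewrite lt0n; apply/negP => /eqP e0.
- have := hc (J :\ e.1) K; rewrite (edges_outD1 _ _ eA) !inE eqxx /=.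
  move: hJK; rewrite (big_setD1 _ eJ) e0 /=.
  have := edges_outS (subxx (A :\ e)) (subD1set J e.1) (subxx K); lia.
- have := hc J (e.2 |: K); rewrite (edges_outD1 _ _ eA) !inE eqxx andbF big_setU1 //= e0.
  have := edges_outS (subxx (A :\ e)) (subxx J) (subsetUr [set e.2] K); lia.
Qed.

Lemma tight_no_cross A a b J1 K1 J2 K2 : transport_cond A a b ->
  \sum_(x in J1) a x = \sum_(y in K1) b y + edges_out A J1 K1 ->
  \sum_(x in J2) a x = \sum_(y in K2) b y + edges_out A J2 K2 ->
  edges_out A (J1 :\: J2) (~: (K2 :\: K1)) = 0.
Proof.
move=> hc t1 t2; have := hc (J1 :|: J2) (K1 :|: K2); have := hc (J1 :&: J2) (K1 :&: K2).
have := sum_setUI J1 J2 a; have := sum_setUI K1 K2 b.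
have := edges_out_uncross A J1 K1 J2 K2; lia.
Qed.

Lemma transport_condD1 A a b e J1 K1 : transport_cond A a b -> e \in A ->
  \sum_(y in K1) b y + edges_out (A :\ e) J1 K1 < \sum_(x in J1) a x ->
  transport_cond (A :\ e) (fun x => a x - (e.1 == x)) (fun y => b y - (e.2 == y)).
Proof.
move=> hc eA hJK1; have [eJ1 eK1 ae be] := critical_edge hc eA hJK1.
have t1 : \sum_(x in J1) a x = \sum_(y in K1) b y + edges_out A J1 K1.
  by have := hc J1 K1; rewrite (edges_outD1 _ _ eA) eJ1 eK1; lia.
move=> J2 K2; rewrite leqNgt; apply/negP => hJK2.
have sa := sum_subn_delta J2 ae; have sb := sum_subn_delta K2 be.
have hc2 := hc J2 K2; rewrite (edges_outD1 _ _ eA) in hc2.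
have [eJ2 eK2] : e.1 \notin J2 /\ e.2 \in K2.
  by case: (e.1 \in J2) (e.2 \in K2) sa sb hc2 => -[] /=; lia.
have t2 : \sum_(x in J2) a x = \sum_(y in K2) b y + edges_out A J2 K2.
  move: sa sb hc2; rewrite (edges_outD1 _ _ eA) (negbTE eJ2) eK2 /=; lia.
by have := tight_no_cross hc t1 t2; rewrite (edges_outD1 _ _ eA) !inE eJ1 eJ2 eK1 eK2.
Qed.

Lemma transport_le A a b : transport_cond A a b ->
  exists2 H : {set X * Y}, H \subset A &
    (forall x, deg1 H x = a x) /\ (forall y, deg2 H y <= b y).
Proof.
elim: {A}_.+1 {-2}A (ltnSn #|A|) a b => // N IH A szA a b hc.
case: (set_0Vmem A) => [A0 | [e eA]].
  exists set0; rewrite ?sub0set //; split=> [x|y]; last by rewrite /deg2 big_set0.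
  by rewrite /deg1 big_set0; move: hc; rewrite A0 => /transport_cond0 ->.
have szAe : #|A :\ e| < N by move: szA; rewrite (cardsD1 e A) eA.
have sAe : A :\ e \subset A := subD1set A e.
have [[J K] /= hJK | ok] := pickP (fun JK : {set X} * {set Y} =>
  \sum_(y in JK.2) b y + edges_out (A :\ e) JK.1 JK.2 < \sum_(x in JK.1) a x).
  have [_ _ ae be] := critical_edge hc eA hJK.
  have [H sH [Ha Hb]] := IH _ szAe _ _ (transport_condD1 hc eA hJK).
  have eH : e \notin H by apply/negP => /(subsetP sH); rewrite !inE eqxx.
  exists (e |: H); first by rewrite subUset sub1set eA (subset_trans sH sAe).
  split=> [x|y]; rewrite ?deg1_setU1 ?deg2_setU1 // ?Ha; last first.
    by have := Hb y; case: eqP => [<-|]; lia.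
  by case: eqP => [<-|]; lia.
have hcAe : transport_cond (A :\ e) a b.
  by move=> J K; have := ok (J, K); rewrite /= ltnNge => /negbFE.
have [H sH HaHb] := IH _ szAe a b hcAe.
by exists H; first exact: subset_trans sH sAe.
Qed.

Lemma transport_cond_graph A H a b : H \subset A ->
  (forall x, deg1 H x = a x) -> (forall y, deg2 H y = b y) -> transport_cond A a b.
Proof.
move=> sHA Ha Hb J K.
rewrite -(eq_bigr _ (fun x _ => Ha x)) -(eq_bigr _ (fun y _ => Hb y)).
rewrite sum_deg1_in sum_deg2_in.
apply: leq_trans (leq_add (leqnn _) (edges_outS sHA (subxx J) (subxx K))).
rewrite /edges_out -big_split; apply: leq_sum => p _.
by case: (p.1 \in J); case: (p.2 \in K).
Qed.

Lemma transport_exists A a b : \sum_x a x = \sum_y b y ->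
  transport_cond A a b <->
  exists2 H : {set X * Y}, H \subset A &
    (forall x, deg1 H x = a x) /\ (forall y, deg2 H y = b y).
Proof.
move=> sab; split=> [/transport_le [H sHA [Ha Hb]] | [H sHA [Ha Hb]]]; last first.
  exact: transport_cond_graph sHA Ha Hb.
exists H => //; split=> //; apply: sum_le_eq Hb _.
by rewrite -sum_deg1_deg2 -sab; apply: eq_bigr.
Qed.

End Transport.

Section Matching.
Variables (X Y : finType) (H : {set X * Y}) (m : nat).
Hypotheses (m_gt0 : 0 < m) (deg1H : forall x, deg1 H x = m).
Hypothesis deg2H : forall y, deg2 H y <= m.

Lemma card_le_of_degrees : #|X| <= #|Y|.
Proof.
rewrite -(leq_pmul2r m_gt0) -!sum_nat_const -(eq_bigr _ (fun x _ => deg1H x)).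
by rewrite sum_deg1_deg2 leq_sum.
Qed.

(* The extra source [None] supplies #|Y| - #|X| and reaches only the vertices of degree
   below m, so an exact transport with unit demands matches X into Y and covers every
   vertex of degree m. *)
Definition augmented_graph : {set option X * Y} :=
  [set p | if p.1 is Some x then (x, p.2) \in H else deg2 H p.2 < m].

Definition augmented_supply (o : option X) : nat :=
  if o is Some _ then 1 else #|Y| - #|X|.

Lemma augmented_transport_cond : transport_cond augmented_graph augmented_supply (fun _ => 1).
Proof.
move=> J K; set nJ := None \in J.
pose c y := \sum_x ((Some x \in J) && ((x, y) \in H)).
pose cJ := \sum_x (Some x \in J).
have c_le y : c y <= deg2 H y by rewrite deg2E; apply: leq_sum => x _; case: (_ \in J).
have sum_c : \sum_y c y = m * cJ.
  rewrite exchange_big big_distrr; apply: eq_bigr => x _ /=.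
  by case: (_ \in J); rewrite ?muln1 ?muln0 -?deg1E ?deg1H // big1.
have supplyE : \sum_(o in J) augmented_supply o = nJ * (#|Y| - #|X|) + cJ.
  by rewrite sum_in_mul sum_option; congr (_ + _); apply: eq_bigr => x _; rewrite muln1.
have edgesE : edges_out augmented_graph J K =
    \sum_y [&& nJ, y \notin K & deg2 H y < m] + \sum_y (y \notin K) * c y.
  rewrite /edges_out sum_pairE sum_option /=; congr (_ + _).
    apply: eq_bigr => y _; rewrite inE /nJ.
    by case: (None \in J); case: (y \in K); case: (deg2 H y < m).
  rewrite exchange_big; apply: eq_bigr => y _; rewrite big_distrr; apply: eq_bigr => x _ /=.
  by rewrite inE /=; case: (Some x \in J); case: ((x, y) \in H); case: (y \in K).
have pointwise y : nJ * m + c y <= nJ * deg2 H y +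
    m * ((y \in K) + ([&& nJ, y \notin K & deg2 H y < m] + (y \notin K) * c y)).
  have := c_le y; have := deg2H y; rewrite /nJ.
  by case: (None \in J); case: (y \in K); case: ltnP => /=; nia.
have := @leq_sum _ (index_enum Y) xpredT _ _ (fun y _ => pointwise y).
rewrite !big_split /= -!big_distrr /= !big_split /= -edgesE sum_c -sum_deg1_deg2.
have sumX : \sum_(x : X) m = #|X| * m by rewrite sum_nat_const.
have sumY : \sum_(y : Y) m = #|Y| * m by rewrite sum_nat_const.
rewrite (eq_bigr _ (fun x _ => deg1H x)) sumX sumY supplyE sum_mem_card sum_nat_const.
have := card_le_of_degrees; rewrite /nJ.
by case: (None \in J) => /=; nia.
Qed.

Lemma matching_cover_max_degree : exists s : X -> Y,
  [/\ injective s, forall x, (x, s x) \in H & forall y, deg2 H y = m -> y \in codom s].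
Proof.
have supply_total : \sum_o augmented_supply o = \sum_(y : Y) 1.
  have sumX : \sum_(x : X) 1 = #|X| by rewrite sum1_card.
  have sumY : \sum_(y : Y) 1 = #|Y| by rewrite sum1_card.
  by rewrite sum_option sumY /= sumX subnK ?card_le_of_degrees.
have [G sGA [Ga Gb]] := (transport_exists _ supply_total).1 augmented_transport_cond.
have G_col x y1 y2 : (Some x, y1) \in G -> (Some x, y2) \in G -> y1 = y2.
  by move: (Ga (Some x)); rewrite deg1E => /eq_leq /sum_pred_le1_uniq; apply.
have G_row y o1 o2 : (o1, y) \in G -> (o2, y) \in G -> o1 = o2.
  by move: (Gb y); rewrite deg2E => /eq_leq /sum_pred_le1_uniq; apply.
have [s Gs] : exists s : X -> Y, forall x, (Some x, s x) \in G.
  apply: (@fin_all_exists _ (fun=> Y) (fun x y => (Some x, y) \in G)) => x.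
  by apply: sum_pred_gt0_exists; rewrite -deg1E Ga.
exists s; split.
- by move=> x1 x2 sx; move: (Gs x1); rewrite sx => /G_row /(_ (Gs x2)) [].
- by move=> x; move: (subsetP sGA _ (Gs x)); rewrite inE.
move=> y Hy; have [[x|] Goy] : exists o, (o, y) \in G.
  by apply: sum_pred_gt0_exists; rewrite -deg2E Gb.
- by apply/codomP; exists x; rewrite (G_col _ _ _ (Gs x) Goy).
- by move: (subsetP sGA _ Goy); rewrite inE /= Hy ltnn.
Qed.
End Matching.

Lemma matching_decomposition (X Y : finType) (H : {set X * Y}) m :
  (forall x, deg1 H x = m) -> (forall y, deg2 H y <= m) ->
  exists f : 'I_m -> X -> Y,
    (forall i, injective (f i)) /\ forall x y, \sum_i (f i x == y) = ((x, y) \in H).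
Proof.
elim: m H => [|m IH] H deg1H deg2H.
  have f0 : 'I_0 -> X -> Y by case.
  exists f0; split=> [[]//|x y]; rewrite big1; last by case.
  by move: (deg1H x) => /eqP; rewrite deg1E sum_nat_eq0 => /forall_inP /(_ y isT) /eqP.
have [s [s_inj sH s_cover]] := matching_cover_max_degree (ltn0Sn m) deg1H deg2H.
pose H' := [set p in H | s p.1 != p.2].
have H_split x y : ((x, y) \in H) = (s x == y) + ((x, y) \in H') :> nat.
  by rewrite inE /=; case: eqP => [<-|_]; rewrite ?sH ?andbT.
have deg1H' x : deg1 H' x = m.
  move: (deg1H x); rewrite !deg1E (eq_bigr _ (fun y _ => H_split x y)) big_split.
  by rewrite sum_delta => -[].
have deg2H' y : deg2 H' y <= m.
  have deg2_split : deg2 H y = \sum_x (s x == y) + deg2 H' y.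
    by rewrite !deg2E (eq_bigr _ (fun x _ => H_split x y)) big_split.
  have := deg2H y; rewrite deg2_split.
  case: (boolP (y \in codom s)) => [/codomP [x ->] | ncov].
    by rewrite (bigD1 x) //= eqxx; lia.
  have : deg2 H y != m.+1 by apply/eqP => /s_cover; apply/negP.
  rewrite deg2_split; lia.
have [f [f_inj fH']] := IH H' deg1H' deg2H'.
exists (fun i => if unlift ord0 i is Some i' then f i' else s); split.
  by move=> i; case: (unlift ord0 i).
move=> x y; rewrite big_ord_recl unlift_none H_split -fH'.
by congr (_ + _); apply: eq_bigr => i _; rewrite liftK.
Qed.

Section Stack.
Variables (T : Type) (r m c : nat) (L : 'I_r -> 'I_c -> T) (M : 'I_m -> 'I_c -> T).

Definition stack : 'I_(r + m) -> 'I_c -> T :=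
  fun i => match split i with inl i' => L i' | inr i' => M i' end.

Lemma stack_lshift i : stack (lshift m i) = L i.
Proof. by rewrite /stack (unsplitK (inl _ i)). Qed.

Lemma stack_rshift i : stack (rshift r i) = M i.
Proof. by rewrite /stack (unsplitK (inr _ i)). Qed.

End Stack.

Section Latin.
Variables (k : nat) (rho : 'I_k -> nat).

Definition free_cells n r (L : 'I_r -> 'I_n -> 'I_k) : {set 'I_n * 'I_k} :=
  [set p | [forall i, L i p.1 != p.2]].

Lemma card_cellsE r c (M : 'I_r -> 'I_c -> 'I_k) l :
  #|[set p : 'I_r * 'I_c | M p.1 p.2 == l]| = \sum_i \sum_j (M i j == l).
Proof. by rewrite -sum_mem_card pair_big /=; apply: eq_bigr => p _; rewrite inE. Qed.

Lemma sum_occ r n (L : 'I_r -> 'I_n -> 'I_k) : \sum_l occ L l = r * n.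
Proof.
rewrite (eq_bigr _ (fun l _ => card_cellsE L l)) exchange_big /=.
under eq_bigr do rewrite exchange_big /= (eq_bigr _ (fun j _ => sum_delta (L _ j))).
rewrite (eq_bigr (fun=> n)) => [|i _]; last by rewrite sum1_card card_ord.
by rewrite sum_nat_const card_ord.
Qed.

Lemma sum_deficiency n r (L : 'I_r -> 'I_n -> 'I_k) :
  rho_latin_rect rho L -> \sum_l rho l = n ^ 2 -> \sum_l (rho l - occ L l) = n * (n - r).
Proof.
move=> [_ _ Locc] sum_rho; rewrite sumnB => [|l _]; last exact: Locc.
by rewrite sum_rho sum_occ; nia.
Qed.

Lemma stack_completes r m (L : 'I_r -> 'I_(r + m) -> 'I_k)
    (M : 'I_m -> 'I_(r + m) -> 'I_k) (H : {set 'I_(r + m) * 'I_k}) :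
  rho_latin_rect rho L -> H \subset free_cells L -> (forall i, injective (M i)) ->
  (forall j l, \sum_i (M i j == l) = ((j, l) \in H)) ->
  (forall l, deg2 H l = rho l - occ L l) -> completable rho L.
Proof.
move=> [Lrow Lcol Locc] /subsetP HL Mrow MH deg2H.
have M_free i i' j : L i' j != M i j.
  have /HL : (j, M i j) \in H.
    by move: (MH j (M i j)); rewrite (bigD1 i) //= eqxx; case: (_ \in H).
  by rewrite inE => /forallP.
have Mcol j : injective (M ^~ j).
  move=> i1 i2 e; have le1 : \sum_i (M i j == M i2 j) <= 1 by rewrite MH leq_b1.
  by apply: (sum_pred_le1_uniq le1); rewrite unfold_in /= ?e.
exists (stack L M); split; last first.
  move=> i i' j ii'; have -> : i = lshift m i' by apply: val_inj.
  by rewrite stack_lshift.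
split.
- by move=> i; rewrite /stack; case: (split i).
- move=> j i1 i2; rewrite -(splitK i1) -(splitK i2) /stack !unsplitK.
  case: (split i1) (split i2) => [a|a] [b|b] /= e.
  + by rewrite (Lcol _ _ _ e).
  + by move: (M_free b a j); rewrite e eqxx.
  + by move: (M_free a b j); rewrite e eqxx.
  + by rewrite (Mcol _ _ _ e).
- move=> l; rewrite card_cellsE big_split_ord /=.
  under eq_bigr do rewrite stack_lshift.
  under [X in _ + X]eq_bigr do rewrite stack_rshift.
  rewrite -card_cellsE -/(occ L l) exchange_big /= (eq_bigr _ (fun j _ => MH j l)).
  by rewrite -deg2E deg2H subnKC ?Locc.
Qed.

Lemma completable_graph r m (L : 'I_r -> 'I_(r + m) -> 'I_k) : completable rho L ->
  (forall l, rho l - occ L l <= m) /\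
  exists2 H : {set 'I_(r + m) * 'I_k}, H \subset free_cells L &
    (forall j, deg1 H j = m) /\ (forall l, deg2 H l = rho l - occ L l).
Proof.
move=> [S [[Srow Scol Socc] SL]].
pose M i := S (rshift r i).
pose H := [set p | [exists i, M i p.1 == p.2]].
have MH j l : \sum_i (M i j == l) = ((j, l) \in H).
  by rewrite inE sum_pred_le1_exists // sum_inj_le1 // => i1 i2 /Scol /rshift_inj.
have rhoE l : rho l = occ L l + deg2 H l.
  rewrite -Socc card_cellsE big_split_ord /= /occ card_cellsE deg2E; congr (_ + _).
    by apply: eq_bigr => i _; apply: eq_bigr => j _; rewrite (SL _ i).
  by rewrite exchange_big; apply: eq_bigr => j _; rewrite MH.
split=> [l|].
  rewrite rhoE addKn deg2E -(eq_bigr _ (fun j _ => MH j l)) exchange_big /=.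
  rewrite -[X in _ <= X]card_ord -sum1_card; apply: leq_sum => i _.
  exact: sum_inj_le1 (Srow (rshift r i)).
exists H.
  apply/subsetP => -[j l]; rewrite !inE => /existsP [i /eqP Mij]; apply/forallP => i'.
  apply/eqP => Lij; have /Scol /eqP : S (lshift m i') j = S (rshift r i) j.
    by rewrite (SL _ i') // Lij.
  by rewrite eq_lrshift.
split=> [j|l]; last by rewrite rhoE addKn.
rewrite deg1E -(eq_bigr _ (fun l _ => MH j l)) exchange_big /=.
by rewrite (eq_bigr (fun=> 1)) ?sum1_card ?card_ord // => i _; apply: sum_delta.
Qed.

Lemma completable_iff_graph r m (L : 'I_r -> 'I_(r + m) -> 'I_k) : rho_latin_rect rho L ->
  completable rho L <-> (forall l, rho l - occ L l <= m) /\
    exists2 H : {set 'I_(r + m) * 'I_k}, H \subset free_cells L &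
      (forall j, deg1 H j = m) /\ (forall l, deg2 H l = rho l - occ L l).
Proof.
move=> rect; split=> [|[c0 [H HL [deg1H deg2H]]]]; first exact: completable_graph.
have [M [Mrow MH]] : exists M : 'I_m -> 'I_(r + m) -> 'I_k,
    (forall i, injective (M i)) /\ forall j l, \sum_i (M i j == l) = ((j, l) \in H).
  by apply: matching_decomposition deg1H _ => l; rewrite deg2H.
exact: stack_completes rect HL Mrow MH deg2H.
Qed.

End Latin.

Section Conditions.
Variables (n r k : nat) (L : 'I_r -> 'I_n -> 'I_k) (d : 'I_k -> nat) (m : nat).

Lemma mu_sym_free J l : mu_sym L J l = \sum_(j in J) ((j, l) \in free_cells L).
Proof. by rewrite /mu_sym card_set_in; apply: eq_bigr => j _; rewrite inE. Qed.

Lemma mu_col_free K j : mu_col L K j = \sum_(l in K) ((j, l) \in free_cells L).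
Proof. by rewrite /mu_col card_set_in; apply: eq_bigr => l _; rewrite inE. Qed.

Lemma mu_KJ_JK J K : mu_KJ L K J = mu_JK L J K.
Proof.
rewrite /mu_KJ /mu_JK (eq_bigr _ (fun j _ => mu_col_free K j)).
by rewrite (eq_bigr _ (fun l _ => mu_sym_free J l)) exchange_big.
Qed.

Lemma edges_out_free J K : edges_out (free_cells L) J K = mu_JK L J (~: K).
Proof.
rewrite /edges_out sum_pairE /mu_JK exchange_big [RHS]sum_in_mul; apply: eq_bigr => l _.
rewrite mu_sym_free sum_in_mul big_distrr; apply: eq_bigr => j _ /=; rewrite in_setC.
by case: (_ \in free_cells L); case: (j \in J); case: (l \in K).
Qed.

Definition cond1 := forall J : {set 'I_n},
  #|J| * m <= \sum_(l : 'I_k) minn (d l) (mu_sym L J l).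
Definition cond2 := forall K : {set 'I_k},
  \sum_(l in K) d l <= \sum_(j : 'I_n) minn m (mu_col L K j).
Definition cond3 := forall J : {set 'I_n},
  #|J| * m >= \sum_(l : 'I_k) (d l - mu_sym L (~: J) l).
Definition cond4 := forall K : {set 'I_k},
  \sum_(l in K) d l >= \sum_(j : 'I_n) (m - mu_col L (~: K) j).
Definition cond5 := forall (J : {set 'I_n}) (K : {set 'I_k}),
  #|J| * m <= \sum_(l in K) d l + mu_JK L J (~: K).
Definition cond6 := forall (J : {set 'I_n}) (K : {set 'I_k}),
  \sum_(l in K) d l <= #|J| * m + mu_KJ L K (~: J).

Lemma cond5_transport : cond5 <-> transport_cond (free_cells L) (fun=> m) d.
Proof. by split=> h J K; have := h J K; rewrite sum_nat_const edges_out_free. Qed.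

Lemma cond1_iff_cond5 : cond1 <-> cond5.
Proof.
split=> h J; last first.
  set K : {set 'I_k} := [set l | d l <= mu_sym L J l].
  apply: leq_trans (h J K) _.
  rewrite /mu_JK (sum_in_mul K) (sum_in_mul (~: K)) -big_split.
  by apply: leq_sum => l _; rewrite !inE; case: leqP => /=; lia.
move=> K; apply: leq_trans (h J) _.
rewrite /mu_JK (sum_in_mul K) (sum_in_mul (~: K)) -big_split.
by apply: leq_sum => l _; rewrite inE; case: (l \in K) => /=; lia.
Qed.

Lemma cond2_iff_cond6 : cond2 <-> cond6.
Proof.
split=> h; last first.
  move=> K; set J : {set 'I_n} := [set j | m <= mu_col L K j].
  apply: leq_trans (h J K) _.
  rewrite /mu_KJ -sum_nat_const (sum_in_mul J) (sum_in_mul (~: J)) -big_split.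
  by apply: leq_sum => j _; rewrite !inE; case: leqP => /=; lia.
move=> J K; apply: leq_trans (h K) _.
rewrite /mu_KJ -sum_nat_const (sum_in_mul J) (sum_in_mul (~: J)) -big_split.
by apply: leq_sum => j _; rewrite inE; case: (j \in J) => /=; lia.
Qed.

Lemma cardsC_ord (J : {set 'I_n}) : #|J| * m + #|~: J| * m = n * m.
Proof. by rewrite -mulnDl cardsC card_ord. Qed.

Hypothesis sum_d : \sum_(l : 'I_k) d l = n * m.

Lemma cond5_iff_cond6 : cond5 <-> cond6.
Proof.
split=> h J K; have := h (~: J) (~: K); rewrite setCK; [rewrite -mu_KJ_JK | rewrite mu_KJ_JK];
  by have := sum_setC K d; have := cardsC_ord J; rewrite sum_d; lia.
Qed.

Lemma cond3_iff_cond5 : cond3 <-> cond5.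
Proof.
split=> h.
  move=> J K; have := h (~: J); rewrite setCK => hJ.
  have : \sum_(l in ~: K) d l <= \sum_(l : 'I_k) (d l - mu_sym L J l) + mu_JK L J (~: K).
    rewrite /mu_JK (sum_in_mul (~: K) d) (sum_in_mul (~: K)) -big_split.
    by apply: leq_sum => l _; case: (l \in ~: K) => /=; lia.
  have := sum_setC K d; have := cardsC_ord J; rewrite sum_d; lia.
move=> J'; set J := ~: J'; set K : {set 'I_k} := [set l | d l <= mu_sym L J l].
have : \sum_(l : 'I_k) (d l - mu_sym L J l) + (\sum_(l in K) d l + mu_JK L J (~: K)) = n * m.
  rewrite -sum_d /mu_JK (sum_in_mul K) (sum_in_mul (~: K)) -!big_split.
  by apply: eq_bigr => l _; rewrite !inE; case: leqP => /=; lia.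
have := h J K; have := cardsC_ord J'; rewrite -/J; lia.
Qed.

Lemma cond4_iff_cond6 : cond4 <-> cond6.
Proof.
have sum_m : \sum_(j : 'I_n) m = n * m by rewrite sum_nat_const card_ord.
split=> h.
  move=> J K; have := h (~: K); rewrite setCK => hK.
  have : \sum_(j : 'I_n) m <=
         \sum_(j : 'I_n) (m - mu_col L K j) + (#|J| * m + mu_KJ L K (~: J)).
    rewrite /mu_KJ -sum_nat_const (sum_in_mul J) (sum_in_mul (~: J)) -!big_split.
    by apply: leq_sum => j _; rewrite inE; case: (j \in J) => /=; lia.
  have := sum_setC K d; rewrite sum_d; lia.
move=> K'; set K := ~: K'; set J : {set 'I_n} := [set j | m <= mu_col L K j].
have : \sum_(j : 'I_n) (m - mu_col L K j) + (#|J| * m + mu_KJ L K (~: J)) =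
       \sum_(j : 'I_n) m.
  rewrite /mu_KJ -sum_nat_const (sum_in_mul J) (sum_in_mul (~: J)) -!big_split.
  by apply: eq_bigr => j _; rewrite !inE; case: leqP => /=; lia.
have := h J K; have := sum_setC K' d; rewrite -/K sum_d; lia.
Qed.

End Conditions.

(* Writing n = r + m lets [split] separate the rows of L from the m new ones. *)
Lemma completable_iff_cond5 k (rho : 'I_k -> nat) n r (L : 'I_r -> 'I_n -> 'I_k) :
  r <= n -> \sum_(l : 'I_k) rho l = n ^ 2 -> rho_latin_rect rho L ->
  completable rho L <->
  (forall l, rho l - occ L l <= n - r) /\ cond5 L (fun l => rho l - occ L l) (n - r).
Proof.
move=> /subnKC; move: (n - r) => m hn; subst n => sum_rho rect.
have sum_d : \sum_(j : 'I_(r + m)) m = \sum_l (rho l - occ L l).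
  by rewrite (sum_deficiency rect sum_rho) sum_nat_const card_ord addKn.
split=> [/(completable_iff_graph rect) [c0 G] | [c0 /cond5_transport G]].
  by split=> //; apply/cond5_transport/(transport_exists _ sum_d).
by apply/(completable_iff_graph rect); split=> //; apply/(transport_exists _ sum_d).
Qed.

Unset Implicit Arguments.

Theorem theorem3p1 (n k : nat) (rho : 'I_k -> nat) (r : nat)
  (L : 'I_r -> 'I_n -> 'I_k) :
  0 < n -> 0 < k ->
  (forall l : 'I_k, 1 <= rho l <= n) -> n <= k ->
  \sum_(l : 'I_k) rho l = n ^ 2 ->
  r < n ->
  rho_latin_rect rho L ->
  let c0 := forall l : 'I_k, rho l - occ L l <= n - r in
  let c1 := forall J : {set 'I_n},
      #|J| * (n - r) <= \sum_(l : 'I_k) minn (rho l - occ L l) (mu_sym L J l) in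
  let c2 := forall K : {set 'I_k},
      \sum_(l in K) (rho l - occ L l) <= \sum_(j : 'I_n) minn (n - r) (mu_col L K j) in
  let c3 := forall J : {set 'I_n},
      #|J| * (n - r) >= \sum_(l : 'I_k) ((rho l - occ L l) - mu_sym L (~: J) l) in
  let c4 := forall K : {set 'I_k},
      \sum_(l in K) (rho l - occ L l) >= \sum_(j : 'I_n) ((n - r) - mu_col L (~: K) j) in
  let c5 := forall (J : {set 'I_n}) (K : {set 'I_k}),
      #|J| * (n - r) <= \sum_(l in K) (rho l - occ L l) + mu_JK L J (~: K) in
  let c6 := forall (J : {set 'I_n}) (K : {set 'I_k}),
      \sum_(l in K) (rho l - occ L l) <= #|J| * (n - r) + mu_KJ L K (~: J) in
  (completable rho L <-> c0 /\ c1) /\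
  (completable rho L <-> c0 /\ c2) /\
  (completable rho L <-> c0 /\ c3) /\
  (completable rho L <-> c0 /\ c4) /\
  (completable rho L <-> c0 /\ c5) /\
  (completable rho L <-> c0 /\ c6).
Proof.
move=> _ _ _ _ sum_rho lt_rn rect c0 c1 c2 c3 c4 c5 c6.
set d := fun l => rho l - occ L l.
have sum_d : \sum_(l : 'I_k) d l = n * (n - r) := sum_deficiency rect sum_rho.
have main : completable rho L <-> c0 /\ cond5 L d (n - r).
  exact: completable_iff_cond5 (ltnW lt_rn) sum_rho rect.
have e1 : c1 <-> cond5 L d (n - r) := cond1_iff_cond5 L d (n - r).
have e2 : c2 <-> cond6 L d (n - r) := cond2_iff_cond6 L d (n - r).
have e3 : c3 <-> cond5 L d (n - r) := cond3_iff_cond5 L sum_d.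
have e4 : c4 <-> cond6 L d (n - r) := cond4_iff_cond6 L sum_d.
have e5 : c5 <-> cond5 L d (n - r) := iff_refl _.
have e6 : c6 <-> cond6 L d (n - r) := iff_refl _.
have e56 : cond5 L d (n - r) <-> cond6 L d (n - r) := cond5_iff_cond6 L sum_d.
clear -main e1 e2 e3 e4 e5 e6 e56; tauto.
Qed.
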